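(* Let $(\mathcal{Y},\eta)$ be an $(n,m)$-voltage operator with $\mathcal{Y}$ connected, let $y_0$ be a flag of $\mathcal{Y}$, $L=\operatorname{Stab}_{\mathcal{C}^m}(y_0)$, $\zeta:L\to\mathcal{C}^n$, $\zeta(\omega)=\eta(W_\omega(y_0))$, and for $\upsilon\in\mathcal{C}^m$ let $\mathcal{Z}_\upsilon=\mathcal{C}^n/\zeta(L\cap L^\upsilon)$. Then the number of distinct premaniplexes in $\{\mathcal{Z}_\upsilon:\upsilon\in\mathcal{C}^m\}$ is at most the number of orbits of $\operatorname{Aut}(\mathcal{Y})$ on the flags of $\mathcal{Y}$.
   Context: An $m$-premaniplex is an edge-coloured graph (semi-edges and parallel edges allowed) with colours $\{0,\dots,m-1\}$ such that every vertex (flag) is the start of exactly one dart of each colour, and for $|i-j|\ge2$ alternating $i,j$-paths of length 4 are closed; $y^i$ is the $i$-adjacent flag. $\mathcal{C}^m=\langle r_0,\dots,r_{m-1}\mid r_i^2,\ (r_ir_j)^2\ (|i-j|\ge2)\rangle$ acts on the left on flags by $r_iy=y^i$; automorphisms act on the right. $L^\upsilon=\upsilon^{-1}L\upsilon$. For a subgroup $K\le\mathcal{C}^n$, $\mathcal{C}^n/K$ is the $n$-premaniplex with flags the left cosets $\omega K$ and $(\omega K)^i=r_i\omega K$. For a flag $y$ and $\omega\in\mathcal{C}^m$, $W_\omega(y)$ is the homotopy class of paths from $y$ whose colour sequence $i_1,\dots,i_k$ satisfies $r_{i_k}\cdots r_{i_1}=\omega$; these form the fundamental groupoid $\Pi(\mathcal{Y})$.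 A voltage assignment $\eta:\Pi(\mathcal{Y})\to\mathcal{C}^n$ satisfies $\eta(W_1W_2)=\eta(W_2)\eta(W_1)$; $(\mathcal{Y},\eta)$ is then an $(n,m)$-voltage operator. *)

From mathcomp Require Import all_boot.
From mathcomp Require Import boolp classical_sets cardinality.
Set Implicit Arguments. Unset Strict Implicit. Unset Printing Implicit Defensive.
Local Open Scope classical_set_scope.

(** * The group C^m = < r_0..r_{m-1} | r_i^2, (r_i r_j)^2 (|i-j|>=2) >
    Elements are represented by words [:: i_1; ...; i_k] standing for the
    product r_{i_1} r_{i_2} ... r_{i_k}; equality in C^m is [cox_eq].
    Product = concatenation, identity = [::], inverse = rev. *)
Definition word (m : nat) := seq 'I_m.

Definition far (m : nat) (i j : 'I_m) : bool := ((i.+1 < j) || (j.+1 < i))%N.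

Inductive cox_eq (m : nat) : word m -> word m -> Prop :=
| cox_refl w : cox_eq w w
| cox_sym u v : cox_eq u v -> cox_eq v u
| cox_trans u v w : cox_eq u v -> cox_eq v w -> cox_eq u w
| cox_sq (a b : word m) (i : 'I_m) : cox_eq (a ++ [:: i; i] ++ b) (a ++ b)
| cox_comm (a b : word m) (i j : 'I_m) :
    far i j -> cox_eq (a ++ [:: i; j; i; j] ++ b) (a ++ b).

Record premaniplex (m : nat) := Premaniplex {
  flag :> Type;
  adj : 'I_m -> flag -> flag;
  adjK : forall i, involutive (adj i);
  adj_far : forall (i j : 'I_m), far i j ->
     forall y, adj i (adj j (adj i (adj j y))) = y }.

Section Premaniplex.
Variables (m : nat) (Y : premaniplex m).

Definition act (w : word m) (y : Y) : Y := foldr (fun i z => adj i z) y w.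

Definition walk_end (y : Y) (s : word m) : Y := foldl (fun z i => adj i z) y s.

Definition connected : Prop := forall y y' : Y, exists s, walk_end y s = y'.

Definition is_aut (a : Y -> Y) : Prop :=
  bijective a /\ forall i y, a (adj i y) = adj i (a y).

Definition aut_orbit (y : Y) : set Y := [set y' | exists a, is_aut a /\ a y = y'].

Definition aut_orbits : set (set Y) := [set aut_orbit y | y in [set: Y]].

Definition stab (y0 : Y) : set (word m) := [set w | act w y0 = y0].

(** voltage assignment on the fundamental groupoid.  The homotopy class
    W_omega(y) is encoded by the pair (y, omega); it goes from y to act omega y,
    and W_{o1}(y) W_{o2}(act o1 y) = W_{o2 o1}(y). *)
Definition voltage_assignment (n : nat) (eta : Y -> word m -> word n) : Prop :=
  (forall y w w', cox_eq w w' -> cox_eq (eta y w) (eta y w')) /\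
  (forall y o1 o2, cox_eq (eta y (o2 ++ o1)) (eta (act o1 y) o2 ++ eta y o1)).

End Premaniplex.

Definition conjw (m : nat) (L : set (word m)) (u : word m) : set (word m) :=
  [set w | exists l, L l /\ cox_eq w (rev u ++ l ++ u)].

Definition imagew (m n : nat) (f : word m -> word n) (S : set (word m)) :
  set (word n) := [set x | exists w, S w /\ cox_eq x (f w)].

Definition lcoset (n : nat) (K : set (word n)) (o : word n) : set (word n) :=
  [set x | exists k, K k /\ cox_eq x (o ++ k)].

(** the premaniplex C^n/K : its flags are the left cosets omega K, with
    (omega K)^i = r_i omega K (the adjacencies are determined by the flag set,
    so C^n/K is identified with its set of flags). *)
Definition coset_premaniplex (n : nat) (K : set (word n)) : set (set (word n)) :=
  [set lcoset K o | o in [set: word n]].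

Definition coset_adj (n : nat) (K : set (word n)) (i : 'I_n) (o : word n) :=
  lcoset K (i :: o).

(* Writing L^u = u^-1 L u for L = Stab(y0), we have L^u = Stab(u^-1 y0), and
   automorphisms commute with the action of C^m, so all flags of one
   Aut(Y)-orbit have the same stabiliser.  Hence Z_u depends only on the orbit
   of u^-1 y0, and u |-> Z_u factors through the set of orbits. *)
From mathcomp Require Import all_boot.
From mathcomp Require Import boolp classical_sets cardinality.
Set Implicit Arguments. Unset Strict Implicit.
Local Open Scope classical_set_scope.
Local Open Scope card_scope.

Lemma cox_eq_cancel_rev (m : nat) (u a b : word m) :
  cox_eq (a ++ rev u ++ u ++ b) (a ++ b).
Proof.
elim: u a b => [|i u IH] a b /=; first exact: cox_refl.
apply: cox_trans (IH a b).
have -> : a ++ rev (i :: u) ++ i :: u ++ b = (a ++ rev u) ++ [:: i; i] ++ (u ++ b).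
  by rewrite rev_cons -cats1 -!catA.
rewrite (catA a (rev u)); exact: cox_sq.
Qed.

Section Action.
Variables (m : nat) (Y : premaniplex m).

Lemma act_cat (a b : word m) (y : Y) : act (a ++ b) y = act a (act b y).
Proof. by rewrite /act foldr_cat. Qed.

Lemma act_cox_eq (w w' : word m) (y : Y) : cox_eq w w' -> act w y = act w' y.
Proof.
elim=> {w w'}.
- by [].
- by move=> u v _ ->.
- by move=> u v w _ -> _ ->.
- by move=> a b i; rewrite !act_cat /= adjK.
- by move=> a b i j far_ij; rewrite !act_cat /= adj_far.
Qed.

Lemma act_revK (u : word m) (y : Y) : act (rev u) (act u y) = y.
Proof.
elim: u y => [//|i u IH] y.
by rewrite rev_cons -cats1 act_cat /= adjK IH.
Qed.

Lemma act_revKV (u : word m) (y : Y) : act u (act (rev u) y) = y.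
Proof. by rewrite -{1}(revK u) act_revK. Qed.

Lemma act_morph (f : Y -> Y) : (forall i y, f (adj i y) = adj i (f y)) ->
  forall (w : word m) (y : Y), act w (f y) = f (act w y).
Proof. by move=> f_adj; elim=> [//|i w IH] y /=; rewrite IH f_adj. Qed.

Lemma stab_aut_orbit (y y' : Y) : aut_orbit y y' -> stab y' = stab y.
Proof.
move=> [f [[f_bij f_adj] <-]]; apply/seteqP; split=> w; rewrite /stab /=.
- by rewrite act_morph // => /(bij_inj f_bij).
- by rewrite act_morph // => ->.
Qed.

Lemma aut_orbit_refl (y : Y) : aut_orbit y y.
Proof. by exists id; split=> //; split=> //; exists id. Qed.

(* An orbit determines Z through the stabiliser of all its flags, so no
   representative has to be chosen. *)
Definition pstab (O : set Y) : set (word m) := [set w | forall y, O y -> act w y = y].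

Lemma pstab_aut_orbit (y : Y) : pstab (aut_orbit y) = stab y.
Proof.
apply/seteqP; split=> w /=; first by apply; exact: aut_orbit_refl.
move=> fixed y' /stab_aut_orbit stab_y'.
by have : stab y' w by rewrite stab_y'.
Qed.

Lemma conjw_stab (y0 : Y) (u : word m) :
  conjw (stab y0) u = stab (act (rev u) y0).
Proof.
apply/seteqP; split=> w /=.
- move=> [l [fixed /act_cox_eq conj_w]].
  by rewrite /stab /= conj_w !act_cat act_revKV fixed.
- rewrite /stab /= => fixed; exists (u ++ w ++ rev u); split.
    by rewrite /stab /= !act_cat fixed act_revKV.
  apply: cox_sym; rewrite -!catA.
  have := cox_eq_cancel_rev u [::] (w ++ rev u ++ u).
  have := cox_eq_cancel_rev u w [::].
  rewrite !cats0 /= => cancel_right cancel_left.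
  exact: cox_trans cancel_left cancel_right.
Qed.

End Action.

Theorem lemma5p8 (n m : nat) (Y : premaniplex m)
  (eta : Y -> word m -> word n) (Heta : voltage_assignment eta)
  (Hconn : connected Y) (y0 : Y) :
  let L := stab y0 in
  let zeta := eta y0 in
  let Z := fun u : word m => coset_premaniplex (imagew zeta (L `&` conjw L u)) in
  [set Z u | u in [set: word m]] #<= @aut_orbits m Y.
Proof.
cbv zeta; set L := stab y0; set zeta := eta y0.
pose Z_of_orbit (O : set Y) := coset_premaniplex (imagew zeta (L `&` pstab O)).
have Z_factors : [set coset_premaniplex (imagew zeta (L `&` conjw L u)) | u in [set: word m]]
    `<=` Z_of_orbit @` aut_orbits (Y:=Y).
  move=> _ [u _ <-]; exists (aut_orbit (act (rev u) y0)).
    by exists (act (rev u) y0).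
  by rewrite /Z_of_orbit pstab_aut_orbit conjw_stab.
exact: card_le_trans (subset_card_le Z_factors) (card_image_le _ _).
Qed.
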